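(* Let $R$ be a commutative ring with identity and $S$ a multiplicative subset of $R$. Let $\xi: 0\rightarrow A\rightarrow B\rightarrow C\rightarrow 0$ be a short $u$-$S$-exact sequence of $R$-modules in which $B$ is $u$-$S$-flat. Then $C$ is $u$-$S$-flat if and only if $\xi$ is $u$-$S$-pure.
   Context: A multiplicative subset $S$ satisfies $1\in S$ and is closed under products. An $R$-module $T$ is $u$-$S$-torsion if $sT=0$ for some $s\in S$. A short sequence $0\to A\xrightarrow{f}B\xrightarrow{g}C\to 0$ is $u$-$S$-exact if there is $s\in S$ with $s\,\mathrm{Ker}(f)=0$, $s\,\mathrm{Ker}(g)\subseteq\mathrm{Im}(f)$, $s\,\mathrm{Im}(f)\subseteq\mathrm{Ker}(g)$, $sC\subseteq\mathrm{Im}(g)$. It is $u$-$S$-pure if for every $R$-module $M$ the induced sequence $0\rightarrow M\otimes_RA\rightarrow M\otimes_RB\rightarrow M\otimes_RC\rightarrow 0$ is $u$-$S$-exact. An $R$-module $F$ is $u$-$S$-flat if for every short $u$-$S$-exact sequence $0\to X\to Y\to Z\to 0$ the induced sequence $0\to X\otimes_RF\to Y\otimes_RF\to Z\otimes_RF\to 0$ is $u$-$S$-exact; equivalently, $\mathrm{Tor}_1^R(M,F)$ is $u$-$S$-torsion for every $R$-module $M$. *)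

From mathcomp Require Import all_boot all_algebra.
Set Implicit Arguments. Unset Strict Implicit. Unset Printing Implicit Defensive.
Import GRing.Theory.
Local Open Scope ring_scope.

Definition multiplicative (R : comPzRingType) (S : R -> Prop) : Prop :=
  S 1 /\ (forall s t, S s -> S t -> S (s * t)).

Definition uS_torsion (R : comPzRingType) (S : R -> Prop) (T : lmodType R) :=
  exists2 s, S s & forall x : T, s *: x = 0.

Definition uS_exact (R : comPzRingType) (S : R -> Prop) (A B C : lmodType R)
  (f : A -> B) (g : B -> C) : Prop :=
  exists2 s, S s &
    [/\ (forall a, f a = 0 -> s *: a = 0),
        (forall b, g b = 0 -> exists a, f a = s *: b),
        (forall a, g (s *: f a) = 0) &
        (forall c, exists b, g b = s *: c)].

Definition bilinear_map (R : comPzRingType) (M A N : lmodType R)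
  (h : M -> A -> N) : Prop :=
  (forall r m1 m2 a, h (r *: m1 + m2) a = r *: h m1 a + h m2 a) /\
  (forall r m a1 a2, h m (r *: a1 + a2) = r *: h m a1 + h m a2).

Definition is_tensor (R : comPzRingType) (M A T : lmodType R)
  (t : M -> A -> T) : Prop :=
  bilinear_map t /\
  forall (N : lmodType R) (h : M -> A -> N), bilinear_map h ->
    (exists k : {linear T -> N}, forall m a, k (t m a) = h m a) /\
    (forall k1 k2 : {linear T -> N},
       (forall m a, k1 (t m a) = h m a) -> (forall m a, k2 (t m a) = h m a) ->
       forall x, k1 x = k2 x).

Definition tensor_left_uS_exact (R : comPzRingType) (S : R -> Prop)
  (M A B C : lmodType R) (f : A -> B) (g : B -> C) : Prop :=
  forall (TA TB TC : lmodType R) (tA : M -> A -> TA) (tB : M -> B -> TB)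
         (tC : M -> C -> TC),
    is_tensor tA -> is_tensor tB -> is_tensor tC ->
    forall (fT : {linear TA -> TB}) (gT : {linear TB -> TC}),
      (forall m a, fT (tA m a) = tB m (f a)) ->
      (forall m b, gT (tB m b) = tC m (g b)) ->
      uS_exact S fT gT.

Definition tensor_right_uS_exact (R : comPzRingType) (S : R -> Prop)
  (F X Y Z : lmodType R) (f : X -> Y) (g : Y -> Z) : Prop :=
  forall (TX TY TZ : lmodType R) (tX : X -> F -> TX) (tY : Y -> F -> TY)
         (tZ : Z -> F -> TZ),
    is_tensor tX -> is_tensor tY -> is_tensor tZ ->
    forall (fT : {linear TX -> TY}) (gT : {linear TY -> TZ}),
      (forall x u, fT (tX x u) = tY (f x) u) ->
      (forall y u, gT (tY y u) = tZ (g y) u) ->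
      uS_exact S fT gT.

Definition uS_pure (R : comPzRingType) (S : R -> Prop) (A B C : lmodType R)
  (f : A -> B) (g : B -> C) : Prop :=
  forall M : lmodType R, tensor_left_uS_exact S M f g.

Definition uS_flat (R : comPzRingType) (S : R -> Prop) (F : lmodType R) : Prop :=
  forall (X Y Z : lmodType R) (f : {linear X -> Y}) (g : {linear Y -> Z}),
    uS_exact S f g -> tensor_right_uS_exact S F f g.

From Pilot Require Import Defs.
From HB Require Import structures.
From mathcomp Require Import all_boot all_algebra boolp finmap.
From mathcomp.multinomials Require Import monalg.

(* Everything is read "up to a scalar s": a map is injective up to s when s
   kills its kernel, a sequence is right exact up to s when s kills every
   obstruction to right exactness, and a u-S-notion holds when it holds up to
   some s in S.  Tensoring preserves right exactness up to s (up to s^2 at the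
   middle term).  The core is a 3x3 diagram chase: if U1 -> U2 -> U3 and
   V1 -> V2 -> V3 are right exact up to s, and U1 (x) V3 -> U2 (x) V3 and
   U2 (x) V1 -> U2 (x) V2 are injective up to s, then U3 (x) V1 -> U3 (x) V2 is
   injective up to a power of s.  If C is u-S-flat, apply it to a free
   presentation K -> P -> M and to xi: P (x) A -> P (x) B is injective up to s
   because P (x) W is a direct sum of copies of W.  If xi is u-S-pure, apply it
   to xi and to any u-S-exact X -> Y -> Z, using purity at Z and the
   u-S-flatness of B.  Injectivity up to s does not depend on the choice of
   tensor products, which exist as the free module on U x V modulo the
   elements killed by every bilinear map. *)

Set Implicit Arguments. Unset Strict Implicit. Unset Printing Implicit Defensive.
Import GRing.Theory.
Local Open Scope ring_scope.
Local Open Scope quotient_scope.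

(** * Exactness up to a scalar *)

Definition multiple_closed (R : pzRingType) (P : R -> Prop) := forall s t, P s -> P (t * s).

Lemma multiple_closed_and (R : pzRingType) (P Q : R -> Prop) :
  multiple_closed P -> multiple_closed Q -> multiple_closed (fun s => P s /\ Q s).
Proof. by move=> mP mQ s t [Ps Qs]; split; [apply: mP | apply: mQ]. Qed.

Section UptoScalar.
Variables (R : pzRingType) (A B C : lmodType R).

Definition injective_upto (s : R) (f : A -> B) := forall a, f a = 0 -> s *: a = 0.

Definition right_exact_upto (s : R) (f : A -> B) (g : B -> C) :=
  [/\ forall b, g b = 0 -> exists a, f a = s *: b,
      forall a, g (s *: f a) = 0 &
      forall c, exists b, g b = s *: c].

Lemma injective_upto_multiple (f : {linear A -> B}) :
  multiple_closed (fun s => injective_upto s f).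
Proof. by move=> s t inj_f a /inj_f; rewrite -scalerA => ->; rewrite scaler0. Qed.

Lemma right_exact_upto_multiple (f : {linear A -> B}) (g : {linear B -> C}) :
  multiple_closed (fun s => right_exact_upto s f g).
Proof.
move=> s t [exact_fg complex_fg onto_g]; split.
- by move=> b /exact_fg [a fa]; exists (t *: a); rewrite linearZ_LR fa scalerA.
- by move=> a; rewrite -scalerA linearZ_LR complex_fg scaler0.
- by move=> c; have [b gb] := onto_g c; exists (t *: b); rewrite linearZ_LR gb scalerA.
Qed.
End UptoScalar.

Section Uniformly.
Variables (R : comPzRingType) (S : R -> Prop).
Hypothesis mulS : Defs.multiplicative S.

Definition uniformly (P : R -> Prop) := exists2 s, S s & P s.

Lemma uniformly1 (P : R -> Prop) : P 1 -> uniformly P.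
Proof. by exists 1; first exact: mulS.1. Qed.

Lemma uniformlyW (P Q : R -> Prop) : (forall s, P s -> Q s) -> uniformly P -> uniformly Q.
Proof. by move=> PQ [s Ss /PQ Qs]; exists s. Qed.

Lemma uniformly_exp (P : R -> Prop) n : uniformly (fun s => P (s ^+ n)) -> uniformly P.
Proof.
case=> s Ss Psn; exists (s ^+ n) => //.
by elim: n {Psn} => [|n IHn]; [exact: mulS.1 | rewrite exprS; apply: mulS.2].
Qed.

Lemma uniformly_and P Q : multiple_closed P -> multiple_closed Q ->
  uniformly P -> uniformly Q -> uniformly (fun s => P s /\ Q s).
Proof.
move=> mP mQ [s Ss Ps] [t St Qt]; exists (t * s); first exact: mulS.2.
by split; [apply: mP | rewrite mulrC; apply: mQ].
Qed.

Section Exact.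
Variables (A B C : lmodType R) (f : {linear A -> B}) (g : {linear B -> C}).

Lemma uS_exact_injective : uS_exact S f g -> uniformly (fun s => injective_upto s f).
Proof. by case=> s Ss [inj_f _ _ _]; exists s. Qed.

Lemma uS_exact_right_exact : uS_exact S f g -> uniformly (fun s => right_exact_upto s f g).
Proof. by case=> s Ss [_ exact_fg complex_fg onto_g]; exists s. Qed.

Lemma uS_exactI : uniformly (fun s => injective_upto s f) ->
  uniformly (fun s => right_exact_upto s f g) -> uS_exact S f g.
Proof.
move=> inj_f fg; have [s Ss [? []]] := uniformly_and (injective_upto_multiple (f := f))
  (right_exact_upto_multiple (f := f) (g := g)) inj_f fg.
by exists s.
Qed.
End Exact.
End Uniformly.

Section GridChase.
Variables (R : pzRingType) (s : R).
Variables (T11 T12 T13 T21 T22 T23 T31 T32 : lmodType R).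
Variables (h11 : {linear T11 -> T12}) (h12 : {linear T12 -> T13}).
Variables (h21 : {linear T21 -> T22}) (h22 : {linear T22 -> T23}).
Variable h31 : {linear T31 -> T32}.
Variables (v11 : {linear T11 -> T21}) (v21 : {linear T21 -> T31}).
Variables (v12 : {linear T12 -> T22}) (v22 : {linear T22 -> T32}).
Variable v13 : {linear T13 -> T23}.
Hypotheses (square11 : forall x, v12 (h11 x) = h21 (v11 x))
           (square12 : forall x, v13 (h12 x) = h22 (v12 x))
           (square21 : forall x, v22 (h21 x) = h31 (v21 x)).
Hypotheses (row1 : right_exact_upto s h11 h12) (row2 : right_exact_upto s h21 h22)
           (col1 : right_exact_upto s v11 v21) (col2 : right_exact_upto s v12 v22).
Hypotheses (inj_v13 : injective_upto s v13) (inj_h21 : injective_upto s h21).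

Lemma grid_injective_upto : injective_upto (s ^+ 5) h31.
Proof.
move=> x h31x; case: row1 row2 col1 col2 => [row1_exact _ _] [_ row2_complex _]
  [_ col1_complex col1_onto] [col2_exact _ _].
have [y v21y] := col1_onto x.
have [z v12z] : exists z, v12 z = s *: h21 y.
  by apply: col2_exact; rewrite square21 v21y linearZ_LR h31x scaler0.
have [w h11w] : exists w, h11 w = s *: (s *: z).
  apply: row1_exact; rewrite linearZ_LR; apply: inj_v13.
  by rewrite square12 v12z row2_complex.
have : s *: (v11 w - s *: (s *: (s *: y))) = 0.
  apply: inj_h21; rewrite linearB !linearZ_LR -square11 h11w !linearZ_LR v12z.
  by rewrite !scalerN subrr.
move/(congr1 v21); rewrite linear0 linearZ_LR linearB !linearZ_LR v21y scalerDr.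
rewrite -(linearZ_LR v21) col1_complex add0r !scalerN => /eqP; rewrite oppr_eq0 => /eqP.
by rewrite !scalerA -expr2 -!exprSr.
Qed.
End GridChase.

(** * Tensor products *)

Definition mklinear (R : pzRingType) (U V : lmodType R) (f : U -> V) (fL : linear f) :
  {linear U -> V} := HB.pack f (GRing.isLinear.Build R U V *:%R f fL).

Section TensorBasics.
Variable R : comPzRingType.
Implicit Types U V W T Z : lmodType R.

Lemma bilinear_linl U V Z (h : U -> V -> Z) : bilinear_map h -> forall v, linear (h^~ v).
Proof. by case=> hl _ v r u1 u2; apply: hl. Qed.

Lemma bilinear_linr U V Z (h : U -> V -> Z) : bilinear_map h -> forall u, linear (h u).
Proof. by case=> _ hr u r v1 v2; apply: hr. Qed.

Section Bilinear.
Variables (U V Z : lmodType R) (h : U -> V -> Z).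
Hypothesis hb : bilinear_map h.

Lemma bilinearZl r u v : h (r *: u) v = r *: h u v.
Proof. exact: (linearZ_LR (mklinear (bilinear_linl hb v))). Qed.
Lemma bilinear0r u : h u 0 = 0.
Proof. exact: (linear0 (mklinear (bilinear_linr hb u))). Qed.
Lemma bilinearZr u r v : h u (r *: v) = r *: h u v.
Proof. exact: (linearZ_LR (mklinear (bilinear_linr hb u))). Qed.
Lemma bilinearBr u v1 v2 : h u (v1 - v2) = h u v1 - h u v2.
Proof. exact: (linearB (mklinear (bilinear_linr hb u))). Qed.
End Bilinear.

Lemma linear_comp_bilinear U V T Z (t : U -> V -> T) (k : {linear T -> Z}) :
  bilinear_map t -> bilinear_map (fun u v => k (t u v)).
Proof. by case=> tl tr; split=> *; rewrite (tl, tr) linearP. Qed.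

Lemma tensor_flip U V T (t : U -> V -> T) : is_tensor t -> is_tensor (fun v u => t u v).
Proof.
case=> [[tl tr] univ]; split=> [|Z h [hl hr]]; first by split=> *; rewrite (tl, tr).
have hb : bilinear_map (fun u v => h v u) by split=> *; rewrite (hl, hr).
have [[k kt] kuniq] := univ Z _ hb.
by split; [exists k | move=> k1 k2 k1t k2t; apply: kuniq].
Qed.

Lemma tensor_ext U V T Z (t : U -> V -> T) (k1 k2 : {linear T -> Z}) :
  is_tensor t -> (forall u v, k1 (t u v) = k2 (t u v)) -> k1 =1 k2.
Proof.
case=> t_bil univ k12; have [_ kuniq] := univ Z _ (linear_comp_bilinear k1 t_bil).
exact: kuniq.
Qed.

Lemma tensor_mapr_exists U V1 V2 T1 T2 (t1 : U -> V1 -> T1) (t2 : U -> V2 -> T2)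
    (f : {linear V1 -> V2}) :
  is_tensor t1 -> is_tensor t2 ->
  exists F : {linear T1 -> T2}, forall u a, F (t1 u a) = t2 u (f a).
Proof.
move=> [_ univ] [[tl tr] _]; apply: (univ _ _ _).1.
by split=> *; rewrite ?linearP (tl, tr).
Qed.

Lemma tensor_mapl_exists U1 U2 V T1 T2 (t1 : U1 -> V -> T1) (t2 : U2 -> V -> T2)
    (f : {linear U1 -> U2}) :
  is_tensor t1 -> is_tensor t2 ->
  exists F : {linear T1 -> T2}, forall u a, F (t1 u a) = t2 (f u) a.
Proof.
move=> /tensor_flip ten1 /tensor_flip ten2.
by have [F FE] := tensor_mapr_exists f ten1 ten2; exists F.
Qed.

Lemma tensor_maps_commute U1 U2 V1 V2 T11 T12 T21 T22 (t11 : U1 -> V1 -> T11)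
    (t12 : U1 -> V2 -> T12) (t21 : U2 -> V1 -> T21) (t22 : U2 -> V2 -> T22)
    (i : U1 -> U2) (f : V1 -> V2) (h1 : {linear T11 -> T12}) (h2 : {linear T21 -> T22})
    (v1 : {linear T11 -> T21}) (v2 : {linear T12 -> T22}) :
  is_tensor t11 ->
  (forall u a, h1 (t11 u a) = t12 u (f a)) -> (forall u a, h2 (t21 u a) = t22 u (f a)) ->
  (forall u a, v1 (t11 u a) = t21 (i u) a) -> (forall u b, v2 (t12 u b) = t22 (i u) b) ->
  forall x, v2 (h1 x) = h2 (v1 x).
Proof.
move=> ten11 h1E h2E v1E v2E; apply: (tensor_ext (k1 := v2 \o h1) (k2 := h2 \o v1) ten11).
by move=> u a /=; rewrite h1E v2E v1E h2E.
Qed.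

Definition tensor_injective_upto (s : R) U V1 V2 (f : V1 -> V2) :=
  forall T1 T2 (t1 : U -> V1 -> T1) (t2 : U -> V2 -> T2) (F : {linear T1 -> T2}),
    is_tensor t1 -> is_tensor t2 -> (forall u a, F (t1 u a) = t2 u (f a)) ->
    injective_upto s F.

Lemma tensor_injective_upto_multiple U V1 V2 (f : V1 -> V2) :
  multiple_closed (fun s => tensor_injective_upto s U f).
Proof.
move=> s t inj_f T1 T2 t1 t2 F ten1 ten2 FE.
exact/injective_upto_multiple/(inj_f _ _ t1 t2).
Qed.

Lemma tensor_injective_uptoI s U V1 V2 T1 T2 (t1 : U -> V1 -> T1) (t2 : U -> V2 -> T2)
    (f : {linear V1 -> V2}) (F : {linear T1 -> T2}) :
  is_tensor t1 -> is_tensor t2 -> (forall u a, F (t1 u a) = t2 u (f a)) ->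
  injective_upto s F -> tensor_injective_upto s U f.
Proof.
move=> ten1 ten2 FE injF T1' T2' t1' t2' F' ten1' ten2' F'E x F'x.
have [to1 to1E] := tensor_mapr_exists idfun ten1' ten1.
have [of1 of1E] := tensor_mapr_exists idfun ten1 ten1'.
have [to2 to2E] := tensor_mapr_exists idfun ten2' ten2.
have to1K y : of1 (to1 y) = y.
  by apply: (tensor_ext (k1 := of1 \o to1) (k2 := idfun) ten1') => u a /=; rewrite to1E of1E.
have comm y : to2 (F' y) = F (to1 y).
  by apply: (tensor_maps_commute (i := idfun) ten1' F'E FE) => *; rewrite ?to1E ?to2E.
by rewrite -[x]to1K -linearZ_LR (injF (to1 x)) ?linear0 // -comm F'x linear0.
Qed.
End TensorBasics.

(** * Quotient modules and right exactness *)

Section Submodule.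
Variables (R : pzRingType) (V : lmodType R).

(* Membership is a [Prop]: the relations defining tensor products quantify
   over all modules. *)
Record submodule := Submodule {
  submod_mem :> V -> Prop;
  submod0 : submod_mem 0;
  submodP : forall r x y, submod_mem x -> submod_mem y -> submod_mem (r *: x + y) }.

Variable N : submodule.

Lemma submodZ r x : N x -> N (r *: x).
Proof. by move=> Nx; rewrite -[_ *: _]addr0; apply: submodP Nx (submod0 N). Qed.
Lemma submodN x : N x -> N (- x).
Proof. by rewrite -scaleN1r; apply: submodZ. Qed.
Lemma submodD x y : N x -> N y -> N (x + y).
Proof. by rewrite -[x in x + _]scale1r; apply: submodP. Qed.

Definition quotrel (x y : V) := `[< N (x - y) >].

Lemma quotrel_equiv : equiv_class_of quotrel.
Proof.
split=> [x|x y|y x z]; rewrite /quotrel.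
- by apply/asboolP; rewrite subrr; apply: submod0.
- by apply/asboolP/asboolP => /submodN; rewrite opprB.
- move=> /asboolP Nxy /asboolP Nyz; apply/asboolP.
  by rewrite -[x](subrK y) -addrA; apply: submodD.
Qed.
End Submodule.

Canonical quotrel_equivRel R V N := EquivRelPack (@quotrel_equiv R V N).

Section QuotientModule.
Variables (R : pzRingType) (V : lmodType R) (N : submodule V).

Definition quotmod := {eq_quot quotrel N}.
HB.instance Definition _ : EqQuotient V (quotrel N) quotmod := EqQuotient.on quotmod.
HB.instance Definition _ := Choice.on quotmod.

Lemma repr_piB x : N (x - repr (\pi_quotmod x)).
Proof. by apply/asboolP; change (quotrel N x (repr (\pi_quotmod x))); rewrite -eqmodE reprK. Qed.

Definition qzero : quotmod := \pi 0.
Definition qopp := lift_op1 quotmod -%R.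
Definition qadd := lift_op2 quotmod +%R.
Definition qscale (r : R) := lift_op1 quotmod ( *:%R r).

Lemma pi_qopp : {morph \pi_quotmod : x / - x >-> qopp x}.
Proof.
move=> x; unlock qopp; apply/eqP; rewrite eqmodE; apply/asboolP.
by rewrite -opprD; apply/submodN/repr_piB.
Qed.
Canonical pi_qopp_morph := PiMorph1 pi_qopp.

Lemma pi_qadd : {morph \pi_quotmod : x y / x + y >-> qadd x y}.
Proof.
move=> x y; unlock qadd; apply/eqP; rewrite eqmodE; apply/asboolP.
by rewrite opprD addrACA; apply: submodD; apply: repr_piB.
Qed.
Canonical pi_qadd_morph := PiMorph2 pi_qadd.

Lemma pi_qscale r : {morph \pi_quotmod : x / r *: x >-> qscale r x}.
Proof.
move=> x; unlock qscale; apply/eqP; rewrite eqmodE; apply/asboolP.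
by rewrite -scalerBr; apply/submodZ/repr_piB.
Qed.
Canonical pi_qscale_morph r := PiMorph1 (pi_qscale r).

Lemma qaddA : associative qadd.
Proof. by move=> x y z; rewrite -[x]reprK -[y]reprK -[z]reprK !piE addrA. Qed.
Lemma qaddC : commutative qadd.
Proof. by move=> x y; rewrite -[x]reprK -[y]reprK !piE addrC. Qed.
Lemma qadd0 : left_id qzero qadd.
Proof. by move=> x; rewrite -[x]reprK !piE add0r. Qed.
Lemma qaddN : left_inverse qzero qopp qadd.
Proof. by move=> x; rewrite -[x]reprK !piE addNr. Qed.
HB.instance Definition _ := GRing.isZmodule.Build quotmod qaddA qaddC qadd0 qaddN.

Lemma qscaleA a b x : qscale a (qscale b x) = qscale (a * b) x.
Proof. by rewrite -[x]reprK !piE scalerA. Qed.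
Lemma qscale1 : left_id 1 qscale.
Proof. by move=> x; rewrite -[x]reprK !piE scale1r. Qed.
Lemma qscaleDr : right_distributive qscale +%R.
Proof. by move=> r x y; rewrite -[x]reprK -[y]reprK !piE scalerDr. Qed.
Lemma qscaleDl x : {morph qscale^~ x : a b / a + b}.
Proof. by move=> a b; rewrite -[x]reprK !piE scalerDl. Qed.
HB.instance Definition _ :=
  GRing.Zmodule_isLmodule.Build R quotmod qscaleA qscale1 qscaleDr qscaleDl.

Definition quotproj (x : V) : quotmod := \pi x.

Lemma quotproj_is_linear : linear quotproj.
Proof. by move=> r x y; rewrite /quotproj !piE. Qed.
HB.instance Definition _ :=
  GRing.isLinear.Build R V quotmod *:%R quotproj quotproj_is_linear.

Lemma quotproj_eqP x y : quotproj x = quotproj y <-> N (x - y).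
Proof.
rewrite /quotproj; split=> [/eqP | Nxy]; first by rewrite eqmodE => /asboolP.
by apply/eqP; rewrite eqmodE; apply/asboolP.
Qed.

Lemma quotproj_eq0 x : quotproj x = 0 <-> N x.
Proof. by rewrite -(linear0 quotproj) quotproj_eqP subr0. Qed.

Lemma quotprojP (P : quotmod -> Prop) : (forall x, P (quotproj x)) -> forall q, P q.
Proof. by move=> Pproj q; rewrite -[q]reprK; apply: Pproj. Qed.

Lemma quotproj_lift (Z : lmodType R) (L : {linear V -> Z}) : (forall x, N x -> L x = 0) ->
  exists k : {linear quotmod -> Z}, forall x, k (quotproj x) = L x.
Proof.
move=> LN; pose k (q : quotmod) := L (repr q).
have kE x : k (quotproj x) = L x.
  by apply/eqP; rewrite -subr_eq0 -linearB LN // -opprB; apply/submodN/repr_piB.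
have k_lin : linear k.
  by move=> r; elim/quotprojP => x; elim/quotprojP => y; rewrite -linearP !kE linearP.
by exists (mklinear k_lin).
Qed.
End QuotientModule.

Section LinearImage.
Variables (R : pzRingType) (U V : lmodType R) (f : {linear U -> V}).

Lemma linear_image0 : exists u, f u = 0.
Proof. by exists 0; rewrite linear0. Qed.

Lemma linear_imageP r x y :
  (exists u, f u = x) -> (exists u, f u = y) -> exists u, f u = r *: x + y.
Proof. by move=> [u <-] [v <-]; exists (r *: u + v); rewrite linearP. Qed.

Definition linear_image := Submodule linear_image0 linear_imageP.
End LinearImage.

Section TensorRightExact.
Variables (R : comPzRingType) (s : R) (U V1 V2 V3 T1 T2 T3 : lmodType R).
Variables (t1 : U -> V1 -> T1) (t2 : U -> V2 -> T2) (t3 : U -> V3 -> T3).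
Variables (f : {linear V1 -> V2}) (g : {linear V2 -> V3}).
Variables (F : {linear T1 -> T2}) (G : {linear T2 -> T3}).
Hypotheses (ten1 : is_tensor t1) (ten2 : is_tensor t2) (ten3 : is_tensor t3).
Hypotheses (FE : forall u a, F (t1 u a) = t2 u (f a))
           (GE : forall u b, G (t2 u b) = t3 u (g b)).
Hypothesis fg : right_exact_upto s f g.

Lemma tensor_complex_upto x : G (s *: F x) = 0.
Proof.
case: fg => _ complex_fg _; rewrite linearZ_LR.
apply: (tensor_ext (k1 := s \*: (G \o F)) (k2 := \0) ten1) => u a /=.
by rewrite FE GE -(bilinearZr ten3.1) -linearZ_LR complex_fg (bilinear0r ten3.1).
Qed.

Lemma tensor_onto_upto z : exists y, G y = s *: z.
Proof.
case: fg => _ _ onto_g; apply/(quotproj_eq0 (linear_image G)).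
apply: (tensor_ext (k1 := quotproj _ \o *:%R s) (k2 := \0) ten3) z => u c /=.
have [b gb] := onto_g c; apply/quotproj_eq0.
by exists (t2 u b); rewrite GE gb (bilinearZr ten3.1).
Qed.

(* With g (b c) = s c, the map (u, c) |-> u (x) s b c is well defined and
   bilinear modulo the image of F; the induced map on T3 sends G y to s^2 y. *)
Lemma tensor_exact_upto y : G y = 0 -> exists x, F x = (s * s) *: y.
Proof.
case: fg => exact_fg _ onto_g.
pose b c := sval (cid (onto_g c)).
have bE c : g (b c) = s *: c by rewrite /b; case: cid.
pose cokerF : {linear T2 -> quotmod (linear_image F)} := quotproj _.
have cokerF_eq u b1 b2 : g b1 = g b2 -> cokerF (t2 u (s *: b1)) = cokerF (t2 u (s *: b2)).
  move=> gb12; apply/quotproj_eqP; rewrite -(bilinearBr ten2.1) -scalerBr.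
  have [a fa] : exists a, f a = s *: (b1 - b2).
    by apply: exact_fg; rewrite linearB gb12 subrr.
  by exists (t1 u a); rewrite FE fa.
pose ph u c := cokerF (t2 u (s *: b c)).
have ph_bil : bilinear_map ph.
  split=> [r u1 u2 c | r u c1 c2]; first by rewrite /ph ten2.1.1 linearP.
  rewrite /ph -linearP -(bilinear_linr ten2.1) scalerA mulrC -scalerA -scalerDr.
  by apply: cokerF_eq; rewrite linearP !bE scalerDr !scalerA mulrC.
have [[k kE] _] := ten3.2 _ _ ph_bil.
have kG y' : k (G y') = cokerF ((s * s) *: y').
  apply: (tensor_ext (k1 := k \o G) (k2 := cokerF \o *:%R (s * s)) ten2) => u b' /=.
  rewrite GE kE /ph -scalerA -!(bilinearZr ten2.1).
  by apply: cokerF_eq; rewrite bE linearZ_LR.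
by move=> Gy; apply/(quotproj_eq0 (linear_image F)); rewrite -kG Gy linear0.
Qed.

Lemma tensor_right_exact_upto : right_exact_upto (s * s) F G.
Proof.
split; first exact: tensor_exact_upto.
- by move=> x; rewrite -scalerA linearZ_LR tensor_complex_upto scaler0.
- move=> z; have [y Gy] := tensor_onto_upto z.
  by exists (s *: y); rewrite linearZ_LR Gy scalerA.
Qed.
End TensorRightExact.

(** * Free modules *)

Section FreeModule.
Variables (R : pzRingType) (K : choiceType) (W : lmodType R).

Definition freemod := {malg W[K]}.
HB.instance Definition _ := GRing.Zmodule.on freemod.

Definition fmscale (r : R) (g : freemod) : freemod := [malg k in msupp g => r *: g@_k].

Lemma fmscaleE r g k : (fmscale r g)@_k = r *: g@_k.
Proof. by rewrite mcoeffE; case: msuppP; rewrite ?scaler0. Qed.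

Lemma fmscaleA a b g : fmscale a (fmscale b g) = fmscale (a * b) g.
Proof. by apply/malgP => k; rewrite !fmscaleE scalerA. Qed.
Lemma fmscale1 : left_id 1 fmscale.
Proof. by move=> g; apply/malgP => k; rewrite fmscaleE scale1r. Qed.
Lemma fmscaleDr : right_distributive fmscale +%R.
Proof. by move=> r g h; apply/malgP => k; rewrite !(mcoeffD, fmscaleE) scalerDr. Qed.
Lemma fmscaleDl g : {morph fmscale^~ g : a b / a + b}.
Proof. by move=> a b; apply/malgP => k; rewrite !(mcoeffD, fmscaleE) scalerDl. Qed.
HB.instance Definition _ :=
  GRing.Zmodule_isLmodule.Build R freemod fmscaleA fmscale1 fmscaleDr fmscaleDl.

Lemma freemod_mcoeffZ (r : R) (g : freemod) k : (r *: g)@_k = r *: g@_k.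
Proof. exact: fmscaleE. Qed.

Definition single (k : K) (w : W) : freemod := << w *g k >>.

Lemma single_is_linear k : linear (single k).
Proof.
move=> r v w; apply/malgP => k'; rewrite mcoeffD freemod_mcoeffZ !mcoeffU.
by case: eqP; rewrite ?scaler0 ?addr0.
Qed.
HB.instance Definition _ k :=
  GRing.isLinear.Build R W freemod *:%R (single k) (single_is_linear k).

Lemma freemod_ext (Z : zmodType) (f1 f2 : {additive freemod -> Z}) :
  (forall k w, f1 (single k w) = f2 (single k w)) -> f1 =1 f2.
Proof. by move=> f12 g; rewrite (monalgE g) !raddf_sum; apply: eq_bigr => k _; apply: f12. Qed.

Section Lift.
Variables (N : lmodType R) (h : K -> {linear W -> N}).

Definition freelift (g : freemod) : N := \sum_(k <- msupp g) h k g@_k.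

Lemma freeliftEw (d : {fset K}) g :
  (msupp g `<=` d)%fset -> freelift g = \sum_(k <- d) h k g@_k.
Proof. by move=> gd; apply: big_fset_incl => // k _ /mcoeff_outdom ->; rewrite linear0. Qed.

Lemma freelift_is_linear : linear freelift.
Proof.
move=> r g1 g2; pose d := (msupp g1 `|` msupp g2 `|` msupp (r *: g1 + g2))%fset.
have sub1 : (msupp g1 `<=` d)%fset by rewrite /d -fsetUA fsubsetUl.
have sub2 : (msupp g2 `<=` d)%fset by rewrite /d fsetUAC fsubsetUr.
have sub3 : (msupp (r *: g1 + g2) `<=` d)%fset by rewrite fsubsetUr.
rewrite (freeliftEw sub1) (freeliftEw sub2) (freeliftEw sub3) scaler_sumr -big_split.
by apply: eq_bigr => k _; rewrite mcoeffD freemod_mcoeffZ linearP.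
Qed.
HB.instance Definition _ := GRing.isLinear.Build R freemod N *:%R freelift freelift_is_linear.

Lemma freelift_single k w : freelift (single k w) = h k w.
Proof. by rewrite (freeliftEw msuppU_le) big_seq_fset1 mcoeffUU. Qed.
End Lift.
End FreeModule.

Section RegularFreeModule.
Variables (R : pzRingType) (Z : lmodType R).

Definition scalev (z : Z) (r : R^o) : Z := (r : R) *: z.

Lemma scalev_is_linear z : linear (scalev z).
Proof. by move=> a r1 r2; rewrite /scalev scalerDl scalerA. Qed.
HB.instance Definition _ z :=
  GRing.isLinear.Build R R^o Z *:%R (scalev z) (scalev_is_linear z).

Lemma single_regular (K : choiceType) (k : K) (r : R) :
  single k (r : R^o) = r *: single k (1 : R^o).
Proof. by rewrite -linearZ_LR /= [r *: _]mulr1. Qed.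

Definition free_cover : {linear freemod Z R^o -> Z} := freelift (fun z : Z => scalev z).

Lemma free_cover_onto z : exists p, free_cover p = z.
Proof.
exists (single z (1 : R^o)).
by apply: etrans (freelift_single _ _ _) _; apply: scale1r.
Qed.
End RegularFreeModule.

Section LinearKernel.
Variables (R : pzRingType) (V W : lmodType R) (f : {linear V -> W}).

Definition kernel_pred : {pred V} := [pred x | f x == 0].

Lemma kernel_pred_closed : submod_closed kernel_pred.
Proof.
split=> [|r x y]; rewrite !inE ?linear0 //.
by move=> /eqP fx /eqP fy; rewrite linearP fx fy scaler0 addr0.
Qed.
HB.instance Definition _ :=
  GRing.isSubmodClosed.Build R V kernel_pred (GRing.submod_closed_semi kernel_pred_closed).

Definition kernel := {x : V | x \in kernel_pred}.
HB.instance Definition _ := Choice.on kernel.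
HB.instance Definition _ := SubType.on kernel.
HB.instance Definition _ := [SubChoice_isSubLmodule of kernel by <:].

Lemma kernel_injective_upto : injective_upto 1 (val : kernel -> V).
Proof. by move=> x x0; rewrite scale1r; apply: val_inj. Qed.

Lemma kernel_right_exact_upto :
  (forall w, exists v, f v = w) -> right_exact_upto 1 (val : kernel -> V) f.
Proof.
move=> onto_f; split=> [v fv | x | w]; rewrite ?scale1r //.
- have kv : v \in kernel_pred by rewrite inE fv.
  by exists (Sub v kv); rewrite SubK.
- by apply/eqP; have := valP x; rewrite inE.
Qed.
End LinearKernel.

Section FreeTensor.
Variables (R : comPzRingType) (K : choiceType).
Implicit Types W : lmodType R.

Definition free_tmulr W (w : W) : {linear freemod K R^o -> freemod K W} :=
  freelift (fun k : K => single k \o scalev w).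

Definition free_tmul W (p : freemod K R^o) (w : W) := free_tmulr w p.

Lemma free_tmul_single W k r (w : W) : free_tmul (single k r) w = single k (r *: w).
Proof. exact: freelift_single. Qed.

Lemma free_tmul_is_tensor W : is_tensor (@free_tmul W).
Proof.
have free_tmul_bil : bilinear_map (@free_tmul W).
  split=> [r p1 p2 w | r p w1 w2]; first exact: linearP.
  rewrite /free_tmul /= /freelift scaler_sumr -big_split; apply: eq_bigr => k _ /=.
  by rewrite /scalev scalerDr scalerA mulrC -scalerA linearP.
split=> // Z h hb; split=> [|k1 k2 k1E k2E].
  pose k := freelift (fun k => mklinear (bilinear_linr hb (single k (1 : R^o)))).
  exists k => p w; apply: (freemod_ext (f1 := k \o free_tmulr w)
    (f2 := mklinear (bilinear_linl hb w))) => m r /=.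
  rewrite [free_tmulr w _]free_tmul_single freelift_single /=.
  by rewrite (bilinearZr hb) (single_regular m r) (bilinearZl hb).
apply: (freemod_ext (f1 := k1) (f2 := k2)) => m w.
rewrite -[w]scale1r -[single m _]free_tmul_single.
exact: etrans (k1E _ _) (esym (k2E _ _)).
Qed.

Definition freemod_map W1 W2 (f : {linear W1 -> W2}) :
    {linear freemod K W1 -> freemod K W2} :=
  freelift (fun k : K => single k \o f).

Lemma freemod_map_tmul W1 W2 (f : {linear W1 -> W2}) p w :
  freemod_map f (free_tmul p w) = free_tmul p (f w).
Proof.
apply: (freemod_ext (f1 := freemod_map f \o free_tmulr w) (f2 := free_tmulr (f w))).
move=> k r /=; rewrite [free_tmulr w _]free_tmul_single [free_tmulr _ _]free_tmul_single.
by rewrite freelift_single /= linearZ_LR.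
Qed.

Lemma mcoeff_freemod_map W1 W2 (f : {linear W1 -> W2}) g k :
  (freemod_map f g)@_k = f g@_k.
Proof.
apply: (freemod_ext (f1 := mcoeff k \o freemod_map f) (f2 := f \o mcoeff k)) => k' w /=.
by rewrite freelift_single /= !mcoeffU raddfMn.
Qed.

Lemma free_tensor_injective_upto s W1 W2 (f : {linear W1 -> W2}) :
  injective_upto s f -> tensor_injective_upto s (freemod K R^o) f.
Proof.
move=> inj_f; apply: (tensor_injective_uptoI (free_tmul_is_tensor W1)
  (free_tmul_is_tensor W2) (freemod_map_tmul f)) => g fg0; apply/malgP => k.
by rewrite freemod_mcoeffZ mcoeff0 inj_f // -mcoeff_freemod_map fg0 mcoeff0.
Qed.
End FreeTensor.

(** * Existence of tensor products *)

Section TensorProduct.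
Variables (R : comPzRingType) (U V : lmodType R).

Definition bilinear_lift (Z : lmodType R) (h : U -> V -> Z) :
    {linear freemod (U * V)%type R^o -> Z} :=
  freelift (fun uv : (U * V)%type => scalev (h uv.1 uv.2)).

Lemma bilinear_lift_single (Z : lmodType R) (h : U -> V -> Z) u v r :
  bilinear_lift h (single (u, v) r) = r *: h u v.
Proof. exact: freelift_single. Qed.

Definition tensor_relation (x : freemod (U * V)%type R^o) :=
  forall (Z : lmodType R) (h : U -> V -> Z), bilinear_map h -> bilinear_lift h x = 0.

Lemma tensor_relation0 : tensor_relation 0.
Proof. by move=> Z h _; rewrite linear0. Qed.

Lemma tensor_relationP r x y :
  tensor_relation x -> tensor_relation y -> tensor_relation (r *: x + y).
Proof. by move=> Rx Ry Z h hb; rewrite linearP Rx // Ry // scaler0 addr0. Qed.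

Definition tensor_relations := Submodule tensor_relation0 tensor_relationP.

Definition tensor := quotmod tensor_relations.

Definition tmul (u : U) (v : V) : tensor :=
  quotproj tensor_relations (single (u, v) (1 : R^o)).

Lemma tmul_bilinear : bilinear_map tmul.
Proof.
split=> [r u1 u2 v | r u v1 v2]; rewrite /tmul -linearP; apply/quotproj_eqP => Z h [hl hr];
  by rewrite linearB linearP !bilinear_lift_single !scale1r (hl, hr) subrr.
Qed.

Lemma tensor_is_tensor : is_tensor tmul.
Proof.
split=> [|Z h hb]; first exact: tmul_bilinear.
split=> [|k1 k2 k1E k2E].
  have [k kE] := quotproj_lift (N := tensor_relations) (L := bilinear_lift h)
    (fun x Rx => Rx Z h hb).
  by exists k => u v; rewrite kE bilinear_lift_single scale1r.
elim/quotprojP => x; apply: (freemod_ext (f1 := k1 \o quotproj tensor_relations)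
  (f2 := k2 \o quotproj tensor_relations)) => -[u v] r /=.
by rewrite single_regular !linearZ_LR k1E k2E.
Qed.
End TensorProduct.

Section TensorGrid.
Variables (R : comPzRingType) (s : R) (U1 U2 U3 V1 V2 V3 : lmodType R).
Variables (i : {linear U1 -> U2}) (p : {linear U2 -> U3}).
Variables (f : {linear V1 -> V2}) (g : {linear V2 -> V3}).
Hypotheses (ip : right_exact_upto s i p) (fg : right_exact_upto s f g).
Hypotheses (inj_i : tensor_injective_upto s V3 i) (inj_f : tensor_injective_upto s U2 f).

Lemma tensor_grid_injective_upto : tensor_injective_upto ((s * s) ^+ 5) U3 f.
Proof.
move=> T31 T32 t31 t32 h31 ten31 ten32 h31E.
have ten U V : is_tensor (@tmul R U V) := tensor_is_tensor U V.
have [h11 h11E] := tensor_mapr_exists f (ten U1 V1) (ten U1 V2).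
have [h12 h12E] := tensor_mapr_exists g (ten U1 V2) (ten U1 V3).
have [h21 h21E] := tensor_mapr_exists f (ten U2 V1) (ten U2 V2).
have [h22 h22E] := tensor_mapr_exists g (ten U2 V2) (ten U2 V3).
have [v11 v11E] := tensor_mapl_exists i (ten U1 V1) (ten U2 V1).
have [v21 v21E] := tensor_mapl_exists p (ten U2 V1) ten31.
have [v12 v12E] := tensor_mapl_exists i (ten U1 V2) (ten U2 V2).
have [v22 v22E] := tensor_mapl_exists p (ten U2 V2) ten32.
have [v13 v13E] := tensor_mapl_exists i (ten U1 V3) (ten U2 V3).
apply: (grid_injective_upto (h11 := h11) (h12 := h12) (h21 := h21) (h22 := h22)
  (v11 := v11) (v21 := v21) (v12 := v12) (v22 := v22) (v13 := v13)).
- exact: tensor_maps_commute (ten U1 V1) h11E h21E v11E v12E.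
- exact: tensor_maps_commute (ten U1 V2) h12E h22E v12E v13E.
- exact: tensor_maps_commute (ten U2 V1) h21E h31E v21E v22E.
- exact: tensor_right_exact_upto (ten U1 V1) (ten U1 V2) (ten U1 V3) h11E h12E fg.
- exact: tensor_right_exact_upto (ten U2 V1) (ten U2 V2) (ten U2 V3) h21E h22E fg.
- exact: tensor_right_exact_upto (tensor_flip (ten U1 V1)) (tensor_flip (ten U2 V1))
    (tensor_flip ten31) (fun a u => v11E u a) (fun a u => v21E u a) ip.
- exact: tensor_right_exact_upto (tensor_flip (ten U1 V2)) (tensor_flip (ten U2 V2))
    (tensor_flip ten32) (fun b u => v12E u b) (fun b u => v22E u b) ip.
- apply/injective_upto_multiple/(inj_i (tensor_flip (ten U1 V3)) (tensor_flip (ten U2 V3))).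
  by move=> c u; apply: v13E.
- exact/injective_upto_multiple/(inj_f (ten U2 V1) (ten U2 V2) h21E).
Qed.
End TensorGrid.

(** * Uniform statements *)

Section UniformTensor.
Variables (R : comPzRingType) (S : R -> Prop).
Hypothesis mulS : Defs.multiplicative S.

Lemma uS_flat_tensor_injective (F X Y Z : lmodType R) (i : {linear X -> Y})
    (p : {linear Y -> Z}) :
  uS_flat S F -> uS_exact S i p -> uniformly S (fun s => tensor_injective_upto s F i).
Proof.
move=> flatF xi; have ten U V : is_tensor (@tmul R U V) := tensor_is_tensor U V.
have [iF iFE] := tensor_mapl_exists i (ten X F) (ten Y F).
have [pF pFE] := tensor_mapl_exists p (ten Y F) (ten Z F).
have [s Ss [inj_iF _ _ _]] :=
  flatF X Y Z i p xi _ _ _ _ _ _ (ten X F) (ten Y F) (ten Z F) iF pF iFE pFE.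
exists s => //; apply: (tensor_injective_uptoI (tensor_flip (ten X F))
  (tensor_flip (ten Y F)) _ inj_iF) => u x.
exact: iFE.
Qed.

Lemma uS_pure_tensor_injective (M A B C : lmodType R) (f : {linear A -> B})
    (g : {linear B -> C}) :
  uS_pure S f g -> uniformly S (fun s => tensor_injective_upto s M f).
Proof.
move=> pure; have ten U V : is_tensor (@tmul R U V) := tensor_is_tensor U V.
have [fM fME] := tensor_mapr_exists f (ten M A) (ten M B).
have [gM gME] := tensor_mapr_exists g (ten M B) (ten M C).
have [s Ss [inj_fM _ _ _]] := pure M _ _ _ _ _ _ (ten M A) (ten M B) (ten M C) fM gM fME gME.
by exists s => //; apply: tensor_injective_uptoI (ten M A) (ten M B) fME inj_fM.
Qed.

Lemma uniformly_tensor_grid (U1 U2 U3 V1 V2 V3 : lmodType R) (i : {linear U1 -> U2})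
    (p : {linear U2 -> U3}) (f : {linear V1 -> V2}) (g : {linear V2 -> V3}) :
  uniformly S (fun s => tensor_injective_upto s V3 i) ->
  uniformly S (fun s => tensor_injective_upto s U2 f) ->
  uniformly S (fun s => right_exact_upto s i p) ->
  uniformly S (fun s => right_exact_upto s f g) ->
  uniformly S (fun s => tensor_injective_upto s U3 f).
Proof.
move=> inj_i inj_f ip fg.
have closed_i := tensor_injective_upto_multiple (U := V3) (f := i).
have closed_f := tensor_injective_upto_multiple (U := U2) (f := f).
have closed_ip := right_exact_upto_multiple (f := i) (g := p).
have closed_fg := right_exact_upto_multiple (f := f) (g := g).
have [s Ss [[inj_i' inj_f'] [ip' fg']]] := uniformly_and mulS
  (multiple_closed_and closed_i closed_f) (multiple_closed_and closed_ip closed_fg)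
  (uniformly_and mulS closed_i closed_f inj_i inj_f)
  (uniformly_and mulS closed_ip closed_fg ip fg).
apply: (uniformly_exp mulS (n := 5)); exists (s * s); first exact: mulS.2.
exact: tensor_grid_injective_upto ip' fg' inj_i' inj_f'.
Qed.

Section ShortExactSequence.
Variables (A B C : lmodType R) (f : {linear A -> B}) (g : {linear B -> C}).
Hypothesis xi : uS_exact S f g.

Lemma uS_pure_of_flat : uS_flat S C -> uS_pure S f g.
Proof.
move=> flatC M TA TB TC tA tB tC tenA tenB tenC F G FE GE.
pose cover := free_cover M.
have cover_rex : right_exact_upto 1 (val : kernel cover -> _) cover.
  exact/kernel_right_exact_upto/free_cover_onto.
have cover_exact : uS_exact S (val : kernel cover -> _) cover.
  by apply: (uS_exactI mulS); apply: uniformly1 => //; apply: kernel_injective_upto.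
have inj_fM : uniformly S (fun s => tensor_injective_upto s M f).
  apply: (uniformly_tensor_grid (uS_flat_tensor_injective flatC cover_exact)) _
    (uniformly1 mulS (P := fun s => right_exact_upto s _ _) cover_rex) (uS_exact_right_exact xi).
  exact: uniformlyW (fun s => free_tensor_injective_upto (K := M) (f := f)) (uS_exact_injective xi).
apply: (uS_exactI mulS).
- by apply: uniformlyW inj_fM => s inj_s; apply: inj_s tenA tenB FE.
- apply: (uniformly_exp mulS (n := 2)); apply: uniformlyW (uS_exact_right_exact xi) => s.
  exact: tensor_right_exact_upto tenA tenB tenC FE GE.
Qed.

Lemma uS_flat_of_pure : uS_flat S B -> uS_pure S f g -> uS_flat S C.
Proof.
move=> flatB pure X Y Z i p xi' TX TY TZ tX tY tZ tenX tenY tenZ F G FE GE.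
have inj_iC : uniformly S (fun s => tensor_injective_upto s C i).
  exact: uniformly_tensor_grid (uS_pure_tensor_injective Z pure)
    (uS_flat_tensor_injective flatB xi') (uS_exact_right_exact xi) (uS_exact_right_exact xi').
apply: (uS_exactI mulS).
- apply: uniformlyW inj_iC => s inj_s.
  by apply: (inj_s _ _ _ _ _ (tensor_flip tenX) (tensor_flip tenY)) => c x; apply: FE.
- apply: (uniformly_exp mulS (n := 2)); apply: uniformlyW (uS_exact_right_exact xi') => s ip.
  apply: (tensor_right_exact_upto (tensor_flip tenX) (tensor_flip tenY) (tensor_flip tenZ)) ip.
  + by move=> c x; apply: FE.
  + by move=> c y; apply: GE.
Qed.
End ShortExactSequence.
End UniformTensor.

(* [GRing.Theory] exports another [multiplicative]; restore the one of [Defs]. *)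
Import Defs.

Theorem proposition2p5 (R : comPzRingType) (S : R -> Prop)
  (A B C : lmodType R) (f : {linear A -> B}) (g : {linear B -> C}) :
  multiplicative S ->
  uS_exact S f g ->
  uS_flat S B ->
  (uS_flat S C <-> uS_pure S f g).
Proof.
move=> mulS xi flatB; split; first exact: uS_pure_of_flat.
exact: uS_flat_of_pure.
Qed.
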